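(* Let $n\ge 2$ and let $(G(k))_{k\in\mathbb{N}}$ be a sequence of digraphs on $\mathcal{V}=\{1,\dots,n\}$ with knowledge sets evolving by the flooding update described in the context. Let $\psi(k)=n$ for $k\le\lceil n/2\rceil-1$ and $\psi(k)=n-k$ for $k\ge\lceil n/2\rceil$; let $\nu(k)=k+2$ for $k\le\lceil n/2\rceil-1$ and $\nu(k)=n$ for $k\ge\lceil n/2\rceil$; and let $\eta(k)=\min\{\psi(k),\nu(k)\}$. If for every $k\in\{0,1,\dots,n-2\}$ the digraph $G(k)$ contains $\eta(k)(k)$, then $\sum_{i=1}^n|\mathcal{K}_i(n-1)|=n^2$.
   Context: Network: $\mathcal{V}=\{1,\dots,n\}$; node $i$ holds initial data $d_i\in\mathbb{R}$, pairwise distinct. At discrete times $k\in\mathbb{N}$ communication follows digraph $G(k)=(\mathcal{V},\mathcal{E}(k))$; node $i$ sends to $j$ at time $k$ iff $(i,j)\in\mathcal{E}(k)$. Knowledge sets: $\mathcal{K}_i(0)=\{d_i\}$ and $\mathcal{K}_j(k+1)=\mathcal{K}_j(k)\cup\bigcup_{i:(i,j)\in\mathcal{E}(k)}\mathcal{K}_i(k)$. An input-cord to node $i$ at time $k$ is an ordered list $(\mathcal{I}^i_1,\dots,\mathcal{I}^i_m)$ of pairwise distinct nodes of $\mathcal{V}\setminus\{i\}$ with $(\mathcal{I}^i_j,\mathcal{I}^i_{j+1})\in\mathcal{E}(k)$ for $j=1,\dots,m-1$ and $(\mathcal{I}^i_m,i)\in\mathcal{E}(k)$; its cardinality is $m$.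 It is closed if moreover $(i,\mathcal{I}^i_1)\in\mathcal{E}(k)$. For an integer $\chi$, node $i$ is contained in a $\chi(k)$-cycle if it has at time $k$ a closed input-cord of cardinality greater than $\chi-2$; $G(k)$ contains $\chi(k)$ if every node is contained in a $\chi(k)$-cycle. *)

From HB Require Import structures.
From mathcomp Require Import all_boot all_order all_algebra.
From mathcomp Require Import finmap.
From mathcomp Require Import reals.

Set Implicit Arguments.
Unset Strict Implicit.
Unset Printing Implicit Defensive.


(* Nodes are 'I_n; the time-varying digraph is E : nat -> rel 'I_n,
   with E k i j meaning (i,j) \in E(k), i.e. i sends to j at time k. *)

Fixpoint knowledge (R : realType) (n : nat) (E : nat -> rel 'I_n)
    (d : 'I_n -> R) (k : nat) (j : 'I_n) : {fset R} :=
  match k with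
  | 0 => [fset d j]%fset
  | k'.+1 => (knowledge E d k' j
             `|` \bigcup_(i <- enum 'I_n | E k' i j) knowledge E d k' i)%fset
  end.

Definition input_cord (n : nat) (e : rel 'I_n) (i : 'I_n) (s : seq 'I_n) : bool :=
  if s is x :: p then [&& path e x p, e (last x p) i, uniq s & i \notin s]
  else false.

Definition closed_input_cord (n : nat) (e : rel 'I_n) (i : 'I_n) (s : seq 'I_n) : bool :=
  input_cord e i s && e i (head i s).

(* node i is contained in a chi-cycle: closed input-cord of cardinality > chi - 2
   (written chi < size s + 2 to avoid truncated subtraction) *)
Definition in_chi_cycle (n : nat) (e : rel 'I_n) (chi : nat) (i : 'I_n) : Prop :=
  exists s : seq 'I_n, closed_input_cord e i s /\ chi < size s + 2.

Definition contains_chi (n : nat) (e : rel 'I_n) (chi : nat) : Prop :=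
  forall i : 'I_n, in_chi_cycle e chi i.

(* ceil(n/2) = uphalf n *)
Definition psi_fn (n k : nat) : nat := if k <= (uphalf n).-1 then n else n - k.
Definition nu_fn (n k : nat) : nat := if k <= (uphalf n).-1 then k + 2 else n.
Definition eta_fn (n k : nat) : nat := minn (psi_fn n k) (nu_fn n k).

(* Fix a datum d_i and let F(k) be the set of nodes that know it at time k.
   A closed input-cord is a directed cycle through its node; if the cycle has
   more nodes than F(k), or more than its complement, it must contain an edge
   leaving F(k), along which d_i spreads.  While |F(k)| = k+1 < n, the bound
   eta(k) > min(k+1, n-k-1) forces such a cycle, so |F(k)| >= k+1 for all
   k <= n-1.  Hence every datum reaches every node by time n-1. *)

From HB Require Import structures.
From mathcomp Require Import all_boot all_order all_algebra.
From mathcomp Require Import finmap.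
From mathcomp Require Import reals.
From mathcomp Require Import zify.

Set Implicit Arguments.
Unset Strict Implicit.

Section Crossing.
Variables (T : eqType) (e : rel T) (A : pred T).

Definition crossing_edge : Prop := exists u v, [/\ A u, ~~ A v & e u v].

Lemma path_crossing (x : T) (p : seq T) :
  path e x p -> A x -> has (predC A) p -> crossing_edge.
Proof.
elim: p x => [//|y p IH] x /= /andP[exy pp] Ax /orP[Ay|hp].
  by exists x, y.
by case: (boolP (A y)) => Ay; [exact: (IH y) | exists x, y].
Qed.

Lemma cycle_crossing (c : seq T) :
  cycle e c -> has A c -> has (predC A) c -> crossing_edge.
Proof.
move=> cc /hasP[a ac Aa] hc.
rewrite -(rot_cycle (index a c)) in cc; rewrite -(has_rot (index a c)) in hc.
move: cc hc; rewrite (rot_index ac) /= rcons_path => /andP[pp _] /orP[/negP//|].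
exact: path_crossing pp Aa.
Qed.

End Crossing.

Lemma uniq_has_notin (T : finType) (A : {set T}) (c : seq T) :
  uniq c -> #|A| < size c -> has (predC (mem A)) c.
Proof.
move=> uc; apply: contraTT; rewrite -all_predC -leqNgt => /allP cA.
rewrite cardE; apply: uniq_leq_size => // x /cA /=.
by rewrite negbK mem_enum.
Qed.

Lemma closed_input_cord_cycle (n : nat) (e : rel 'I_n) (i : 'I_n) s :
  closed_input_cord e i s -> cycle e (i :: s) && uniq (i :: s).
Proof.
case: s => [//|x p] /andP[/and4P[px el uq ni] eix].
by rewrite cons_uniq ni uq /= rcons_path eix px el.
Qed.

Lemma contains_chi_crossing (n : nat) (e : rel 'I_n) (chi : nat) (A : {set 'I_n}) :
  contains_chi e chi -> A != set0 -> A != setT ->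
  minn #|A| #|~: A| < chi -> crossing_edge e (mem A).
Proof.
move=> hchi /set0Pn[a aA] AnT.
have [b _ bA] : exists2 b, b \in [set: 'I_n] & b \notin A by apply/subsetPn; rewrite subTset.
have cord_cycle w : exists c, [/\ w \in c, cycle e c, uniq c & chi <= size c].
  have [s [/closed_input_cord_cycle/andP[cc uc] hs]] := hchi w.
  by exists (w :: s); split; rewrite ?mem_head //=; lia.
rewrite gtn_min => /orP[ltA|ltC].
- have [c [ac cc uc szc]] := cord_cycle a.
  apply: (cycle_crossing cc); first by apply/hasP; exists a.
  exact/uniq_has_notin/(leq_trans ltA).
- have [c [bc cc uc szc]] := cord_cycle b.
  apply: (cycle_crossing cc); last by apply/hasP; exists b.
  have := uniq_has_notin uc (leq_trans ltC szc).
  by apply: sub_has => x /=; rewrite in_setC negbK.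
Qed.

Lemma eta_fn_gt_min (n k : nat) :
  k.+2 <= n -> minn k.+1 (n - k.+1) < eta_fn n k.
Proof. rewrite /eta_fn /psi_fn /nu_fn; case: ifP => _; lia. Qed.

Section Flooding.
Variables (R : realType) (n : nat) (E : nat -> rel 'I_n) (d : 'I_n -> R).

Definition informed (x : R) (k : nat) : {set 'I_n} :=
  [set j | x \in knowledge E d k j].

Lemma informed_subset x k : informed x k \subset informed x k.+1.
Proof.
by apply/subsetP => j; rewrite !inE /= => ->.
Qed.

Lemma informed_edge x k u v :
  E k u v -> u \in informed x k -> v \in informed x k.+1.
Proof.
rewrite !inE /= => euv xu; apply/orP; right.
by apply/bigfcupP; exists u => //; rewrite mem_enum euv.
Qed.

Lemma informed_grows x k :
  crossing_edge (E k) (mem (informed x k)) -> #|informed x k| < #|informed x k.+1|.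
Proof.
move=> [u [v [uF vF euv]]].
have sub : v |: informed x k \subset informed x k.+1.
  by rewrite subUset informed_subset sub1set (informed_edge euv).
by have := subset_leq_card sub; rewrite cardsU1 vF.
Qed.

Lemma knowledge_sub_image k j :
  (knowledge E d k j `<=` [fset d y | y : 'I_n])%fset.
Proof.
elim: k j => [|k IH] j /=.
  by rewrite fsub1set; apply: in_imfset.
by rewrite fsubUset IH /=; apply/bigfcupsP => i _ _; exact: IH.
Qed.

Hypothesis eta_cycles : forall k, k <= n - 2 -> contains_chi (E k) (eta_fn n k).

Lemma informed_card i k : k <= n - 1 -> k.+1 <= #|informed (d i) k|.
Proof.
elim: k => [_|k IH hk].
  by apply/card_gt0P; exists i; rewrite inE /= in_fset1.
set F := informed (d i) k.
have hk2 : k <= n - 2 by lia.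
have [le_F|] := leqP k.+2 #|F|.
  exact: leq_trans le_F (subset_leq_card (informed_subset _ _)).
rewrite ltnS => ge_F.
have cardF : #|F| = k.+1 by apply/eqP; rewrite eqn_leq ge_F IH // ltnW.
have cardC : #|~: F| = n - k.+1 by have := cardsC F; rewrite card_ord cardF; lia.
suff : #|F| < #|informed (d i) k.+1| by rewrite cardF.
apply: informed_grows; apply: (contains_chi_crossing (eta_cycles hk2)).
- by rewrite -card_gt0 cardF.
- by apply/eqP => FT; move: cardF; rewrite /F FT cardsT card_ord; lia.
- by rewrite cardF cardC eta_fn_gt_min //; lia.
Qed.

Lemma knowledge_complete i j : 2 <= n -> d i \in knowledge E d (n - 1) j.
Proof.
move=> n2; have card_F := informed_card i (leqnn (n - 1)).
have FT : informed (d i) (n - 1) = setT.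
  by apply/eqP; rewrite eqEcard subsetT cardsT card_ord; lia.
by move: (in_setT j); rewrite -FT inE.
Qed.

End Flooding.

Theorem theorem3 (R : realType) (n : nat) (E : nat -> rel 'I_n) (d : 'I_n -> R) :
  2 <= n ->
  injective d ->
  (forall k : nat, k <= n - 2 -> contains_chi (E k) (eta_fn n k)) ->
  (\sum_(i < n) #|` knowledge E d (n - 1) i|)%N = (n ^ 2)%N.
Proof.
move=> n2 dinj eta_cycles.
have cardK j : #|` knowledge E d (n - 1) j| = n.
  have -> : knowledge E d (n - 1) j = [fset d y | y : 'I_n]%fset.
    apply/eqP; rewrite eqEfsubset knowledge_sub_image /=.
    by apply/fsubsetP => _ /imfsetP[y _ ->]; exact: knowledge_complete.
  by rewrite card_imfset //= size_enum_ord.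
by rewrite (eq_bigr (fun _ => n)) // sum_nat_const card_ord.
Qed.
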